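(* Let $d\ge2$, $b:=2^d$, $N\in\mathbb{N}$, $L:=\min\{\ell\ge0:b^\ell\ge N\}$, and assume $L\ge3$. Then \[ S_{L-2}\le\frac{2^{d-1}}{2^{d-1}-1}\,2^{-L}\le2\cdot2^{-L}. \]
   Context: For $0\le\ell\le L-3$: $\Delta_\ell:=\frac{2^{2d-3}}{N}2^{\ell(d-1)}$, $S_0:=0$, $S_{\ell+1}:=S_\ell+\Delta_\ell$; thus $S_{L-2}=\sum_{\ell=0}^{L-3}\Delta_\ell$. *)

From mathcomp Require Import all_boot all_order all_algebra.
Set Implicit Arguments. Unset Strict Implicit. Unset Printing Implicit Defensive.
Import Order.TTheory GRing.Theory Num.Theory.
Local Open Scope ring_scope.

Definition Delta (R : realFieldType) (d N l : nat) : R :=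
  (2%:R ^+ (2 * d - 3)) / N%:R * 2%:R ^+ (l * (d - 1)).

Fixpoint S (R : realFieldType) (d N l : nat) : R :=
  match l with
  | 0 => 0
  | l'.+1 => S R d N l' + Delta R d N l'
  end.

(** The increments [Delta_l] form a geometric progression of ratio
    [q = 2^(d-1) >= 2], so their sum up to [L-3] is at most the next term
    divided by [q - 1].  Minimality of [L] gives [N > 2^(d(L-1))], which
    bounds that term [Delta_(L-2)] by [q 2^-L]; finally [q/(q-1) <= 2]. *)
From mathcomp Require Import all_boot all_order all_algebra.
From mathcomp Require Import ring lra zify.
Import Order.TTheory GRing.Theory Num.Theory.
Local Open Scope ring_scope.

Lemma ltn_pow_pred_of_min (b N L : nat) :
  (forall l : nat, (N <= b ^ l)%N -> (L <= l)%N) -> (0 < L)%N ->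
  (b ^ (L - 1) < N)%N.
Proof. by move=> hmin hL; rewrite ltnNge; apply/negP => /hmin; lia. Qed.

Lemma ratio_div_pred_le2 (R : realFieldType) (q : R) : 2 <= q -> q / (q - 1) <= 2.
Proof. by move=> q2; rewrite ler_pdivrMr; lra. Qed.

Section GeometricIncrements.
Variables (R : realFieldType) (d N : nat).
Local Notation q := (2%:R ^+ (d - 1) : R).

Lemma Delta_ge0 l : 0 <= Delta R d N l.
Proof. by rewrite /Delta !mulr_ge0 ?invr_ge0 ?exprn_ge0. Qed.

Lemma DeltaS l : Delta R d N l.+1 = Delta R d N l * q.
Proof. by rewrite /Delta (mulSn l) addnC exprD mulrA. Qed.

Lemma S_mul_ratio_sub1 k : S R d N k * (q - 1) = Delta R d N k - Delta R d N 0.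
Proof.
elim: k => [|k IH] /=; first by rewrite mul0r subrr.
by rewrite mulrDl IH DeltaS; ring.
Qed.

Lemma S_le_Delta_div (k : nat) : 1 < q -> S R d N k <= Delta R d N k / (q - 1).
Proof.
move=> q1; rewrite ler_pdivlMr ?subr_gt0 // S_mul_ratio_sub1.
by rewrite lerBlDr lerDl Delta_ge0.
Qed.

Lemma Delta_mul_exp2 L : (2 <= d)%N -> (2 <= L)%N ->
  Delta R d N (L - 2) * 2%:R ^+ L = q * (2%:R ^+ d) ^+ (L - 1) / N%:R.
Proof.
move=> hd hL; rewrite -exprM -exprD.
have -> : (d - 1 + d * (L - 1) = 2 * d - 3 + (L - 2) * (d - 1) + L)%N by nia.
by rewrite /Delta !exprD; ring.
Qed.

End GeometricIncrements.

Theorem lemma2p10 (R : realFieldType) (d N L : nat)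
  (hd : (2 <= d)%N)
  (hLge : (N <= (2 ^ d) ^ L)%N)
  (hLmin : forall l : nat, (N <= (2 ^ d) ^ l)%N -> (L <= l)%N)
  (hL3 : (3 <= L)%N) :
  S R d N (L - 2) <=
    (2%:R ^+ (d - 1)) / (2%:R ^+ (d - 1) - 1) * (2%:R ^+ L)^-1
  /\ (2%:R ^+ (d - 1)) / (2%:R ^+ (d - 1) - 1) * (2%:R ^+ L)^-1
     <= 2%:R * (2%:R ^+ L)^-1 :> R.
Proof.
set q : R := 2%:R ^+ (d - 1).
have q2 : 2 <= q.
  by rewrite /q -natrX ler_nat -[X in (X <= _)%N]expn1 leq_pexp2l //; lia.
have hN : (2%:R ^+ d) ^+ (L - 1) < N%:R :> R.
  by rewrite -!natrX ltr_nat; apply: ltn_pow_pred_of_min hLmin _; lia.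
have hN0 : 0 < N%:R :> R by apply: le_lt_trans _ hN; rewrite !exprn_ge0.
have h2L : 0 < 2%:R ^+ L :> R by rewrite exprn_gt0.
have last_term : Delta R d N (L - 2) <= q * (2%:R ^+ L)^-1.
  rewrite ler_pdivlMr // Delta_mul_exp2 //; last by lia.
  by rewrite ler_pdivrMr // ler_pM2l ?exprn_gt0 // ltW.
split; last by rewrite ler_pM2r ?invr_gt0 // ratio_div_pred_le2.
have q1 : 1 < q by lra.
apply: le_trans (S_le_Delta_div R d N (L - 2) q1) _.
by rewrite [leRHS]mulrAC ler_pM2r ?invr_gt0 ?subr_gt0.
Qed.
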